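(* Let $(G,\mathcal{P})$ be a group pair and $n\in\mathbb{N}$ with $n\ge1$. The following are equivalent: (i) $(G,\mathcal{P})$ is of type $\mathsf{FP}_n$; (ii) the $\mathbb{Z}G$-module $\Delta_{G/\mathcal{P}}$ is finitely generated and for every $k=1,\dots,n-1$ and every exact sequence of $\mathbb{Z}G$-modules $P_k\xrightarrow{\partial_k}P_{k-1}\to\cdots\to P_1\xrightarrow{\partial_1}P_0\oplus\mathbb{Z}[G/\mathcal{P}]\xrightarrow{\eta+\varepsilon}\mathbb{Z}\to0$ with each $P_i$ ($i=0,\dots,k$) finitely generated projective (and $\eta\colon P_0\to\mathbb{Z}$ a $\mathbb{Z}G$-map), the module $\ker(\partial_k)$ is finitely generated; (iii) there is an exact sequence of $\mathbb{Z}G$-modules $L_n\to L_{n-1}\to\cdots\to L_1\to L_0\oplus\mathbb{Z}[G/\mathcal{P}]\xrightarrow{\eta+\varepsilon}\mathbb{Z}\to0$ with each $L_i$ ($i=0,\dots,n$) finitely generated free (and $\eta\colon L_0\to\mathbb{Z}$ a $\mathbb{Z}G$-map).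
   Context: A group pair $(G,\mathcal{P})$: $G$ finitely generated, $\mathcal{P}$ a non-empty finite collection of subgroups (repetitions allowed). $\mathbb{Z}[G/\mathcal{P}]=\bigoplus_{P\in\mathcal{P}}\bigoplus_{gP\in G/P}\mathbb{Z}$ is the permutation $\mathbb{Z}G$-module, $\varepsilon\colon\mathbb{Z}[G/\mathcal{P}]\to\mathbb{Z}$ the augmentation that is the identity on each summand, $\Delta_{G/\mathcal{P}}=\ker\varepsilon$; $\mathbb{Z}$ is the trivial module. $(G,\mathcal{P})$ is of type $\mathsf{FP}_n$ if $\Delta_{G/\mathcal{P}}$ has a projective $\mathbb{Z}G$-resolution finitely generated in degrees $0,\dots,n-1$. *)

From Stdlib Require List.
From HB Require Import structures.
From mathcomp Require Import all_boot all_order all_algebra.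
Set Implicit Arguments. Unset Strict Implicit. Unset Printing Implicit Defensive.
Import Order.TTheory GRing.Theory Num.Theory.
Local Open Scope ring_scope.

Record group := Group {
  gcar :> Type;
  gmul : gcar -> gcar -> gcar;
  gone : gcar;
  ginv : gcar -> gcar;
  gmulA : forall x y z, gmul x (gmul y z) = gmul (gmul x y) z;
  gmul1 : forall x, gmul gone x = x;
  gmulV : forall x, gmul (ginv x) x = gone }.

Inductive gen (G : group) (S : seq G) : G -> Prop :=
| gen_in x : Stdlib.Lists.List.In x S -> gen S x
| gen_one : gen S (gone G)
| gen_inv x : gen S x -> gen S (ginv x)
| gen_mul x y : gen S x -> gen S y -> gen S (gmul x y).

Definition fin_gen_group (G : group) : Prop := exists S : seq G, forall g, gen S g.

Record subgroup (G : group) := Subgroup {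
  smem : G -> Prop;
  smem1 : smem (gone G);
  smemM : forall x y, smem x -> smem y -> smem (gmul x y);
  smemV : forall x, smem x -> smem (ginv x) }.

(** * ZG-modules = abelian groups with a G-action by additive maps *)
Record gmod (G : group) := GMod {
  mcar :> zmodType;
  mact : G -> mcar -> mcar;
  mactD : forall g x y, mact g (x + y) = mact g x + mact g y;
  mact1 : forall x, mact (gone G) x = x;
  mactM : forall g h x, mact (gmul g h) x = mact g (mact h x) }.

Arguments mact {G} _ _ _.

Definition is_hom (G : group) (M N : gmod G) (f : M -> N) : Prop :=
  (forall x y, f (x + y) = f x + f y) /\ (forall g x, f (mact M g x) = mact N g (f x)).

Definition Zmod (G : group) : gmod G :=
  @GMod G int (fun _ z => z) (fun _ _ _ => erefl) (fun _ => erefl) (fun _ _ _ => erefl).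

Section DSum.
Variables (G : group) (M N : gmod G).
Definition dsum_act (g : G) (x : (M * N)%type) : (M * N)%type :=
  (mact M g x.1, mact N g x.2).
Lemma dsum_actD g x y : dsum_act g (x + y) = dsum_act g x + dsum_act g y.
Proof. by rewrite /dsum_act /= !mactD. Qed.
Lemma dsum_act1 x : dsum_act (gone G) x = x.
Proof. by case: x => a b; rewrite /dsum_act /= !mact1. Qed.
Lemma dsum_actM g h x : dsum_act (gmul g h) x = dsum_act g (dsum_act h x).
Proof. by rewrite /dsum_act /= !mactM. Qed.
Definition dsum : gmod G := @GMod G (M * N)%type dsum_act dsum_actD dsum_act1 dsum_actM.
End DSum.

Inductive span (G : group) (M : gmod G) (xs : seq M) : M -> Prop :=
| span_in x : x \in xs -> span xs x
| span_0 : span xs 0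
| span_add x y : span xs x -> span xs y -> span xs (x + y)
| span_opp x : span xs x -> span xs (- x)
| span_act g x : span xs x -> span xs (mact M g x).

Definition fg_sub (G : group) (M : gmod G) (A : M -> Prop) : Prop :=
  exists xs : seq M, (forall x, x \in xs -> A x) /\ (forall x, A x -> span xs x).

Definition fg (G : group) (M : gmod G) : Prop := exists xs : seq M, forall x, span xs x.

Definition projective (G : group) (M : gmod G) : Prop :=
  forall (A B : gmod G) (p : A -> B) (f : M -> B),
    is_hom p -> is_hom f -> (forall b, exists a, p a = b) ->
    exists h : M -> A, is_hom h /\ (forall x, p (h x) = f x).

Definition fg_free (G : group) (M : gmod G) : Prop :=
  exists (k : nat) (b : 'I_k -> M), forall (N : gmod G) (y : 'I_k -> N),
    exists f : M -> N, [/\ is_hom f, (forall i, f (b i) = y i) &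
      (forall f' : M -> N, is_hom f' -> (forall i, f' (b i) = y i) -> forall x, f' x = f x)].

(** Z[G/P] for a finite family P_0..P_{m-1} of subgroups: the module generated by
    elements e_i fixed by P_i, universal for this property (Hom(Z[G/P],N) = N^P) *)
Definition is_perm_module (G : group) (m : nat) (Ps : 'I_m -> subgroup G)
    (M : gmod G) (e : 'I_m -> M) : Prop :=
  (forall i p, smem (Ps i) p -> mact M p (e i) = e i) /\
  forall (N : gmod G) (y : 'I_m -> N), (forall i p, smem (Ps i) p -> mact N p (y i) = y i) ->
    exists f : M -> N, [/\ is_hom f, (forall i, f (e i) = y i) &
      (forall f' : M -> N, is_hom f' -> (forall i, f' (e i) = y i) -> forall x, f' x = f x)].

Definition is_augmentation (G : group) (m : nat) (M : gmod G) (e : 'I_m -> M)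
    (eps : M -> Zmod G) : Prop :=
  is_hom eps /\ forall i, eps (e i) = 1.

Definition Delta (G : group) (M : gmod G) (eps : M -> Zmod G) : M -> Prop :=
  fun x => eps x = 0.

(** type FP_n of the pair: Δ has a projective resolution Q_* -> Δ
    finitely generated in degrees 0..n-1 (a : Q_0 -> Z[G/P] has image exactly Δ) *)
Definition pair_FP (G : group) (M : gmod G) (eps : M -> Zmod G) (n : nat) : Prop :=
  exists (Q : nat -> gmod G) (d : forall j, Q j.+1 -> Q j) (a : Q 0%N -> M),
    [/\ is_hom a /\ (forall j, is_hom (d j)),
        (forall x, Delta eps (a x)) /\ (forall y, Delta eps y -> exists x, a x = y),
        (forall x, a x = 0 <-> exists z, d 0%N z = x),
        (forall j (x : Q j.+1), d j x = 0 <-> exists z, d j.+1 z = x) &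
        (forall j, projective (Q j)) /\ (forall j, (j < n)%N -> fg (Q j))].

Definition augC (G : group) (P : nat -> gmod G) (M : gmod G) (i : nat) : gmod G :=
  match i with 0 => dsum (P 0%N) M | j.+1 => P j.+1 end.

Definition etaeps (G : group) (P0 M : gmod G) (eta : P0 -> Zmod G) (eps : M -> Zmod G)
  : dsum P0 M -> Zmod G := fun x => eta x.1 + eps x.2.

(** exactness of C_k -> ... -> C_1 -> C_0 -> Z -> 0 (maps d 0, ..., d (k-1), aug) *)
Definition exact_upto (G : group) (C : nat -> gmod G) (d : forall i, C i.+1 -> C i)
    (aug : C 0%N -> Zmod G) (k : nat) : Prop :=
  [/\ is_hom aug, (forall i, (i < k)%N -> is_hom (d i)),
      (forall z : Zmod G, exists x, aug x = z),
      (forall x, aug x = 0 <-> exists z, d 0%N z = x) &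
      (forall i, (i.+1 < k)%N -> forall x : C i.+1, d i x = 0 <-> exists z, d i.+1 z = x)].

(* Everything is reduced to the finiteness type of the submodule Delta = ker eps of
   Z[G/P], measured by the recursive predicate [fp_sub].  A generalised Schanuel lemma
   shows that if Delta is of type FP_(k+1), the kernel of every finitely generated
   projective module mapping onto it is of type FP_k; walking along an exact sequence
   then turns (i) into (ii), and resolutions by finitely generated free modules, built
   one kernel at a time, give (iii) and the converses.  A sequence ending in
   P_0 (+) Z[G/P] -> Z is compared with Delta through the isomorphism
   ker(eta + eps) ~= P_0 (+) Delta, (x, y) |-> (x, y + psi x), where psi lifts eta along
   eps. *)

From Pilot Require Import Defs.
From HB Require Import structures.
From mathcomp Require Import all_boot all_order all_algebra.
From mathcomp Require Import boolp freeg.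
Set Implicit Arguments. Unset Strict Implicit. Unset Printing Implicit Defensive.
Import GRing.Theory.
Local Open Scope ring_scope.

Section AdditiveMorphisms.
Variables (U V : zmodType) (f : U -> V).
Hypothesis fD : {morph f : x y / x + y}.

Lemma morph_add0 : f 0 = 0.
Proof. by apply: (addrI (f 0)); rewrite -fD !addr0. Qed.

Lemma morph_addN : {morph f : x / - x}.
Proof. by move=> x; apply/eqP; rewrite -subr_eq0 opprK -fD addNr morph_add0. Qed.

End AdditiveMorphisms.

Lemma mulrz_closed_pred (V : zmodType) (S : V -> Prop) :
  S 0 -> (forall x y, S x -> S y -> S (x + y)) -> (forall x, S x -> S (- x)) ->
  forall x z, S x -> S (x *~ z).
Proof.
move=> S0 SD SN x z Sx.
have Sxn n : S (x *+ n) by elim: n => [|n IH]; rewrite ?mulr0n ?mulrS; auto.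
by case: z => n; rewrite /intmul; auto.
Qed.

Section Homomorphisms.
Variable G : group.
Implicit Types M N O : gmod G.

Lemma mact0 M g : mact M g 0 = 0.
Proof. exact: morph_add0 (mactD g). Qed.

Lemma mactN M g : {morph mact M g : x / - x}.
Proof. exact: morph_addN (mactD g). Qed.

Lemma hom0 M N (f : M -> N) : is_hom f -> f 0 = 0.
Proof. by case=> fD _; apply: morph_add0. Qed.

Lemma homN M N (f : M -> N) : is_hom f -> {morph f : x / - x}.
Proof. by case=> fD _; apply: morph_addN. Qed.

Lemma homB M N (f : M -> N) : is_hom f -> {morph f : x y / x - y}.
Proof. by move=> hf x y; rewrite hf.1 (homN hf). Qed.

Lemma hom_id M : is_hom (@id M).
Proof. by []. Qed.

Lemma hom_comp M N O (f : M -> N) (g : N -> O) : is_hom f -> is_hom g -> is_hom (g \o f).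
Proof. by move=> [fD fA] [gD gA]; split=> *; rewrite /= ?fD ?gD ?fA ?gA. Qed.

Lemma hom_zero M N : is_hom (fun _ : M => 0 : N).
Proof. by split=> *; rewrite ?addr0 ?mact0. Qed.

Lemma hom_add M N (f g : M -> N) : is_hom f -> is_hom g -> is_hom (fun x => f x + g x).
Proof.
move=> hf hg; split=> [x y|a x]; first by rewrite hf.1 hg.1 addrACA.
by rewrite mactD hf.2 hg.2.
Qed.

Lemma hom_sub M N (f g : M -> N) : is_hom f -> is_hom g -> is_hom (fun x => f x - g x).
Proof.
move=> hf [gD gA]; apply: hom_add => //.
by split=> [x y|a x]; rewrite ?gD ?opprD ?mactN ?gA.
Qed.

Lemma hom_pair M N O (f : O -> M) (g : O -> N) : is_hom f -> is_hom g ->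
  is_hom (fun z => (f z, g z) : dsum M N).
Proof. by move=> hf hg; split=> [x y|a x]; rewrite ?hf.1 ?hg.1 ?hf.2 ?hg.2. Qed.

Lemma hom_fst M N : is_hom (fun z : dsum M N => z.1).
Proof. by []. Qed.

Lemma hom_snd M N : is_hom (fun z : dsum M N => z.2).
Proof. by []. Qed.

Lemma hom_inl M N : is_hom (fun x : M => (x, 0) : dsum M N).
Proof. exact: hom_pair (hom_id _) (hom_zero _ _). Qed.

Lemma hom_inr M N : is_hom (fun y : N => (0, y) : dsum M N).
Proof. exact: hom_pair (hom_zero _ _) (hom_id _). Qed.

Lemma dsum_split M N (x : M) (y : N) : ((x, y) : dsum M N) = (x, 0) + (0, y).
Proof.
by have -> : ((x, 0) + (0, y) : dsum M N) = (x + 0, 0 + y) by []; rewrite addr0 add0r.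
Qed.

End Homomorphisms.

Section Submodules.
Variable G : group.
Implicit Types M N : gmod G.

Definition gmod_closed M (S : M -> Prop) : Prop :=
  [/\ S 0, (forall x y, S x -> S y -> S (x + y)), (forall x, S x -> S (- x))
    & (forall g x, S x -> S (mact M g x))].

Definition kerp M N (f : M -> N) : M -> Prop := fun x => f x = 0.

Definition maps_onto M N (f : M -> N) (S : N -> Prop) : Prop :=
  (forall x, S (f x)) /\ (forall y, S y -> exists x, f x = y).

Lemma span_closed M (xs : seq M) : gmod_closed (Defs.span xs).
Proof. by split; [exact: span_0 | exact: span_add | exact: span_opp | exact: span_act]. Qed.

Lemma kerp_closed M N (f : M -> N) : is_hom f -> gmod_closed (kerp f).
Proof.
rewrite /kerp => hf; split=> [|x y|x|g x]; first exact: hom0.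
- by rewrite hf.1 => -> ->; rewrite addr0.
- by rewrite (homN hf) => ->; rewrite oppr0.
- by rewrite hf.2 => ->; rewrite mact0.
Qed.

Lemma image_closed M N (f : M -> N) : is_hom f -> gmod_closed (fun y => exists x, f x = y).
Proof.
move=> hf; split.
- by exists 0; rewrite (hom0 hf).
- by move=> _ _ [x <-] [y <-]; exists (x + y); rewrite hf.1.
- by move=> _ [x <-]; exists (- x); rewrite (homN hf).
- by move=> g _ [x <-]; exists (mact M g x); rewrite hf.2.
Qed.

Lemma preim_closed M N (f : M -> N) (S : N -> Prop) : gmod_closed S -> is_hom f ->
  gmod_closed (fun x => S (f x)).
Proof.
case=> S0 SD SN SA hf; split=> [|x y|x|g x]; first by rewrite (hom0 hf).
- by rewrite hf.1; apply: SD.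
- by rewrite (homN hf); apply: SN.
- by rewrite hf.2; apply: SA.
Qed.

Lemma closed_span_sub M (S : M -> Prop) (xs : seq M) : gmod_closed S ->
  (forall x, x \in xs -> S x) -> forall x, Defs.span xs x -> S x.
Proof. by case=> S0 SD SN SA xsS x; elim=> //; auto. Qed.

Lemma span_subset M (xs ys : seq M) :
  (forall y, y \in xs -> y \in ys) -> forall x, Defs.span xs x -> Defs.span ys x.
Proof. by move=> xsys; apply: closed_span_sub (span_closed _) _ => y /xsys /span_in. Qed.

Lemma span_catl M (xs ys : seq M) x : Defs.span xs x -> Defs.span (xs ++ ys) x.
Proof. by apply: span_subset => y y_xs; rewrite mem_cat y_xs. Qed.

Lemma span_catr M (xs ys : seq M) x : Defs.span ys x -> Defs.span (xs ++ ys) x.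
Proof. by apply: span_subset => y y_ys; rewrite mem_cat y_ys orbT. Qed.

Lemma span_hom M N (f : M -> N) (xs : seq M) : is_hom f ->
  forall x, Defs.span xs x -> Defs.span (map f xs) (f x).
Proof.
move=> hf x; elim=> {x} [x x_xs||x y _ Hx _ Hy|x _ Hx|g x _ Hx].
- by apply: span_in; apply: map_f.
- by rewrite (hom0 hf); apply: span_0.
- by rewrite hf.1; apply: span_add.
- by rewrite (homN hf); apply: span_opp.
- by rewrite hf.2; apply: span_act.
Qed.

Lemma fg_sub_image M N (f : M -> N) (S : N -> Prop) : is_hom f -> fg M ->
  maps_onto f S -> fg_sub S.
Proof.
move=> hf [xs xsP] [fS Sf]; exists (map f xs); split=> [_ /mapP [x _ ->] //|y /Sf [x <-]].
exact: span_hom.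
Qed.

End Submodules.

Section FreeModule.
Variables (G : group) (X : Type).

Definition free_key : choiceType := {classic (gcar G * X)%type}.
Definition free_zmod : zmodType := {freeg free_key / int}.

Lemma free_zmod_ind (S : free_zmod -> Prop) :
  S 0 -> (forall x y, S x -> S y -> S (x + y)) -> (forall x, S x -> S (- x)) ->
  (forall k, S << k >>) -> forall D, S D.
Proof.
move=> S0 SD SN Sk D; elim/freeg_ind_dom0: D => // z k D _ _ SD_D; apply: (SD) => //.
by rewrite -[z]intz -freegU_mulz; exact: mulrz_closed_pred S0 SD SN _ _ (Sk k).
Qed.

Lemma free_zmod_eq (V : zmodType) (f1 f2 : free_zmod -> V) :
  {morph f1 : x y / x + y} -> {morph f2 : x y / x + y} ->
  (forall k, f1 << k >> = f2 << k >>) -> forall D, f1 D = f2 D.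
Proof.
move=> f1D f2D; apply: free_zmod_ind => [|x y ex ey|x ex].
- by rewrite !morph_add0.
- by rewrite f1D f2D ex ey.
- by rewrite !morph_addN // ex.
Qed.

Definition free_lift (V : zmodType) (f : free_key -> zmodule V) : free_zmod -> V :=
  fglift f.

HB.instance Definition _ (V : zmodType) (f : free_key -> zmodule V) :=
  GRing.isZmodMorphism.Build free_zmod V (free_lift f) (lift_is_additive f).

Lemma free_lift_key (V : zmodType) (f : free_key -> zmodule V) k : free_lift f << k >> = f k.
Proof. by rewrite /free_lift liftU scale1r. Qed.

Definition free_act (g : G) : free_zmod -> free_zmod :=
  free_lift (fun k : free_key => << ((gmul g k.1, k.2) : free_key) >>).

Lemma free_act_key g (k : free_key) :
  free_act g << k >> = << ((gmul g k.1, k.2) : free_key) >>.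
Proof. by rewrite /free_act free_lift_key. Qed.

Lemma free_actD g : {morph free_act g : x y / x + y}.
Proof. exact: raddfD. Qed.

Lemma free_act1 D : free_act (gone G) D = D.
Proof.
by apply: (@free_zmod_eq _ _ id (free_actD _)) => // -[a b]; rewrite free_act_key gmul1.
Qed.

Lemma free_actM g h D : free_act (gmul g h) D = free_act g (free_act h D).
Proof.
apply: (@free_zmod_eq _ _ (free_act g \o free_act h) (free_actD _)) => [x y|[a b]] /=.
  by rewrite !free_actD.
by rewrite !free_act_key gmulA.
Qed.

Definition free_gmod : gmod G := GMod free_actD free_act1 free_actM.

Definition free_gen (x : X) : free_gmod := << ((gone G, x) : free_key) >>.

Definition free_map (N : gmod G) (y : X -> N) : free_gmod -> N :=
  free_lift (fun k : free_key => mact N k.1 (y k.2) : zmodule N).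

Lemma free_map_key (N : gmod G) (y : X -> N) (k : free_key) :
  free_map y << k >> = mact N k.1 (y k.2).
Proof. by rewrite /free_map free_lift_key. Qed.

Lemma free_mapD (N : gmod G) (y : X -> N) : {morph free_map y : a b / a + b}.
Proof. exact: raddfD. Qed.

Lemma free_map_hom (N : gmod G) (y : X -> N) : is_hom (free_map y).
Proof.
split=> [|g]; first exact: free_mapD.
apply: free_zmod_eq => [a b|a b|[h x]] /=; rewrite ?free_actD ?free_mapD ?mactD //.
by rewrite free_act_key !free_map_key mactM.
Qed.

Lemma free_map_gen (N : gmod G) (y : X -> N) x : free_map y (free_gen x) = y x.
Proof. by rewrite free_map_key mact1. Qed.

End FreeModule.

Arguments free_gen G {X} x.

Section GroupAxioms.
Variable G : group.

Lemma gmulxV (x : G) : gmul x (ginv x) = gone G.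
Proof.
by rewrite -[gmul x _]gmul1 -(gmulV (ginv x)) -gmulA (gmulA (ginv x)) gmulV gmul1.
Qed.

Lemma gmulx1 (x : G) : gmul x (gone G) = x.
Proof. by rewrite -(gmulV x) gmulA gmulxV gmul1. Qed.

End GroupAxioms.

Section FreeModuleTheory.
Variable G : group.
Implicit Types M N P Q : gmod G.

Lemma free_gmod_ind X (S : free_gmod G X -> Prop) : gmod_closed S ->
  (forall x, S (free_gen G x)) -> forall D, S D.
Proof.
case=> S0 SD SN SA Sgen; apply: free_zmod_ind => // -[h x].
have -> : << ((h, x) : free_key G X) >> = mact (free_gmod G X) h (free_gen G x).
  by rewrite /= free_act_key /= gmulx1.
exact: SA.
Qed.

Lemma free_map_unique X N (y : X -> N) (f : free_gmod G X -> N) :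
  is_hom f -> (forall x, f (free_gen G x) = y x) -> forall D, f D = free_map y D.
Proof.
move=> hf fy D; apply/eqP; rewrite -subr_eq0; apply/eqP; move: D.
apply: free_gmod_ind; first exact: kerp_closed (hom_sub hf (free_map_hom y)).
by move=> x; rewrite /kerp fy free_map_gen subrr.
Qed.

Lemma free_hom_ext X N (f1 f2 : free_gmod G X -> N) : is_hom f1 -> is_hom f2 ->
  (forall x, f1 (free_gen G x) = f2 (free_gen G x)) -> forall D, f1 D = f2 D.
Proof.
move=> h1 h2 e D; rewrite (free_map_unique h1 e).
by rewrite (free_map_unique h2 (fun x => erefl)).
Qed.

Lemma free_projective X : projective (free_gmod G X).
Proof.
move=> A B p f hp hf p_onto.
have [a pa] := choice (fun x => p_onto (f (free_gen G x))).
exists (free_map a); split; first exact: free_map_hom.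
apply: free_hom_ext (hom_comp (free_map_hom a) hp) hf _ => x /=.
by rewrite free_map_gen pa.
Qed.

Lemma free_fg k : fg (free_gmod G 'I_k).
Proof.
exists [seq free_gen G i | i <- enum 'I_k].
apply: free_gmod_ind; first exact: span_closed.
by move=> i; apply: span_in; rewrite map_f ?mem_enum.
Qed.

Lemma free_fg_free k : fg_free (free_gmod G 'I_k).
Proof.
exists k, (free_gen G) => N y; exists (free_map y); split.
- exact: free_map_hom.
- exact: free_map_gen.
- by move=> f hf fy; apply: free_map_unique.
Qed.

Lemma free_gmod0_eq0 (D : free_gmod G 'I_0) : D = 0.
Proof. by move: D; apply: free_gmod_ind (kerp_closed (hom_id _)) _ => -[]. Qed.

Definition fgproj P := projective P /\ fg P.

Lemma free_fgproj k : fgproj (free_gmod G 'I_k).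
Proof. by split; [apply: free_projective | apply: free_fg]. Qed.

Lemma retract_fgproj P Q (s : P -> Q) (r : Q -> P) : is_hom s -> is_hom r ->
  (forall x, r (s x) = x) -> fgproj Q -> fgproj P.
Proof.
move=> hs hr rs [Qproj [ys ysP]]; split; last first.
  by exists (map r ys) => x; rewrite -[x]rs; apply: span_hom.
move=> A B p f hp hf p_onto.
have [l [hl pl]] := Qproj A B p (f \o r) hp (hom_comp hr hf) p_onto.
exists (l \o s); split=> [|x]; first exact: hom_comp hs hl.
by rewrite /= pl /= rs.
Qed.

Lemma fg_free_fgproj P : fg_free P -> fgproj P.
Proof.
case=> k [b bP].
have [s [hs sb _]] := bP (free_gmod G 'I_k) (free_gen G).
have [f0 [_ _ b_unique]] := bP P b.
apply: (retract_fgproj hs (free_map_hom b)) (free_fgproj k) => x.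
transitivity (f0 x); last by symmetry; apply: b_unique.
apply: (b_unique (free_map b \o s)); first exact: hom_comp hs (free_map_hom b).
by move=> i /=; rewrite sb free_map_gen.
Qed.

End FreeModuleTheory.

Arguments free_projective {G X}.
Arguments free_fgproj {G k}.
Arguments free_fg_free {G k}.

Section SubModule.
Variables (G : group) (M : gmod G) (S : M -> Prop).
Hypothesis S_closed : gmod_closed S.

Definition sub_carrier := {classic {x : M | S x}}.
HB.instance Definition _ := Choice.on sub_carrier.

Let S0 : S 0. Proof. by case: S_closed. Qed.
Let SD x y : S x -> S y -> S (x + y). Proof. by case: S_closed => _ SD _ _; apply: SD. Qed.
Let SN x : S x -> S (- x). Proof. by case: S_closed => _ _ SN _; apply: SN. Qed.
Let SA g x : S x -> S (mact M g x). Proof. by case: S_closed => _ _ _ SA; apply: SA. Qed.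

Definition sub_zero : sub_carrier := exist _ 0 S0.
Definition sub_add (a b : sub_carrier) : sub_carrier :=
  exist _ _ (SD (svalP a) (svalP b)).
Definition sub_opp (a : sub_carrier) : sub_carrier := exist _ _ (SN (svalP a)).
Definition sub_act g (a : sub_carrier) : sub_carrier := exist _ _ (SA g (svalP a)).

Lemma sval_inj (a b : sub_carrier) : sval a = sval b -> a = b.
Proof.
by case: a b => [a Sa] [b Sb] /= eab; subst b; congr exist; apply: Prop_irrelevance.
Qed.

Lemma sub_addA : associative sub_add.
Proof. by move=> a b c; apply: sval_inj; rewrite /= addrA. Qed.
Lemma sub_addC : commutative sub_add.
Proof. by move=> a b; apply: sval_inj; rewrite /= addrC. Qed.
Lemma sub_add0 : left_id sub_zero sub_add.
Proof. by move=> a; apply: sval_inj; rewrite /= add0r. Qed.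
Lemma sub_addN : left_inverse sub_zero sub_opp sub_add.
Proof. by move=> a; apply: sval_inj; rewrite /= addNr. Qed.

HB.instance Definition _ :=
  GRing.isZmodule.Build sub_carrier sub_addA sub_addC sub_add0 sub_addN.

Lemma sub_actD g (a b : sub_carrier) : sub_act g (a + b) = sub_act g a + sub_act g b.
Proof. by apply: sval_inj; rewrite /= mactD. Qed.
Lemma sub_act1 (a : sub_carrier) : sub_act (gone G) a = a.
Proof. by apply: sval_inj; rewrite /= mact1. Qed.
Lemma sub_actM g h (a : sub_carrier) : sub_act (gmul g h) a = sub_act g (sub_act h a).
Proof. by apply: sval_inj; rewrite /= mactM. Qed.

Definition sub_gmod : gmod G := GMod sub_actD sub_act1 sub_actM.

End SubModule.

Section LiftingAndSums.
Variable G : group.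
Implicit Types M N P Q : gmod G.

Lemma proj_lift_image P Q N (g : Q -> N) (h : P -> N) :
  projective P -> is_hom g -> is_hom h -> (forall x, exists y, g y = h x) ->
  exists a : P -> Q, is_hom a /\ forall x, g (a x) = h x.
Proof.
move=> Pproj hg hh hg_h.
pose I := sub_gmod (image_closed hg).
pose g' (y : Q) : I := exist _ (g y) (ex_intro _ y erefl).
pose h' (x : P) : I := exist _ (h x) (hg_h x).
have hg' : is_hom g' by split=> [x y|a x]; apply: sval_inj; rewrite /= ?hg.1 ?hg.2.
have hh' : is_hom h' by split=> [x y|a x]; apply: sval_inj; rewrite /= ?hh.1 ?hh.2.
have g'_onto (b : I) : exists y, g' y = b.
  by case: b => b [y gy]; exists y; apply: sval_inj; rewrite /= gy.
have [a [ha g'a]] := Pproj _ _ g' h' hg' hh' g'_onto.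
by exists a; split=> // x; move: (g'a x) => /(congr1 sval).
Qed.

Lemma dsum_projective P Q : projective P -> projective Q -> projective (dsum P Q).
Proof.
move=> Pproj Qproj A B p f hp hf p_onto.
have [l1 [hl1 pl1]] := Pproj A B p _ hp (hom_comp (hom_inl _ _) hf) p_onto.
have [l2 [hl2 pl2]] := Qproj A B p _ hp (hom_comp (hom_inr _ _) hf) p_onto.
exists (fun z => l1 z.1 + l2 z.2); split.
  exact: hom_add (hom_comp (hom_fst _ _) hl1) (hom_comp (hom_snd _ _) hl2).
by case=> x y; rewrite hp.1 pl1 pl2 -hf.1 -dsum_split.
Qed.

Lemma dsum_fg P Q : fg P -> fg Q -> fg (dsum P Q).
Proof.
move=> [xs xsP] [ys ysP].
exists (map (fun x => (x, 0) : dsum P Q) xs ++ map (fun y => (0, y) : dsum P Q) ys).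
case=> x y; rewrite dsum_split; apply: span_add.
- by apply: span_catl; apply: span_hom (hom_inl P Q) _ _.
- by apply: span_catr; apply: span_hom (hom_inr P Q) _ _.
Qed.

Lemma dsum_fgproj P Q : fgproj P -> fgproj Q -> fgproj (dsum P Q).
Proof. by move=> [Pp Pfg] [Qp Qfg]; split; [apply: dsum_projective | apply: dsum_fg]. Qed.

Lemma fg_sub_free_cover M (S : M -> Prop) : gmod_closed S -> fg_sub S ->
  exists (n : nat) (f : free_gmod G 'I_n -> M), is_hom f /\ maps_onto f S.
Proof.
move=> S_closed [xs [xsS Sxs]].
exists (size xs), (free_map (fun i : 'I_(size xs) => nth 0 xs i)).
split; first exact: free_map_hom; split.
  apply: free_gmod_ind; first exact: preim_closed S_closed (free_map_hom _).
  by move=> i; rewrite free_map_gen; apply/xsS/mem_nth.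
move=> y /Sxs; apply: closed_span_sub (image_closed (free_map_hom _)) _ _ => x.
by case/(nthP 0) => i i_lt <-; exists (free_gen G (Ordinal i_lt)); rewrite free_map_gen.
Qed.

End LiftingAndSums.

Section FiniteTypeSubmodules.
Variable G : group.
Implicit Types M N P Q R : gmod G.

(* [fp_sub k S] says that the submodule [S] is of type FP_(k+1). *)
Fixpoint fp_sub (k : nat) M (S : M -> Prop) : Prop :=
  match k with
  | 0 => fg_sub S
  | k.+1 => exists P (f : P -> M),
      [/\ fgproj P, is_hom f, maps_onto f S & fp_sub k (kerp f)]
  end.

Lemma fp_sub_fg k M (S : M -> Prop) : fp_sub k S -> fg_sub S.
Proof. by case: k => [//|k] [P [f [[_ Pfg] hf fS _]]]; apply: fg_sub_image hf Pfg fS. Qed.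

Lemma fp_sub_inj_image k M N (i : M -> N) (S : M -> Prop) (T : N -> Prop) :
  is_hom i -> (forall x, i x = 0 -> x = 0) ->
  (forall x, S x -> T (i x)) -> (forall y, T y -> exists2 x, S x & i x = y) ->
  fp_sub k S -> fp_sub k T.
Proof.
elim: k M N i S T => [|k IH] M N i S T hi i_inj ST TS.
  case=> xs [xsS Sxs]; exists (map i xs).
  split=> [_ /mapP [x /xsS Sx ->]|y]; first exact: ST.
  by case/TS=> x /Sxs Sx <-; apply: span_hom.
case=> P [f [Pfgp hf [fS Sf] fp_ker]]; exists P, (i \o f); split=> //.
- exact: hom_comp hf hi.
- by split=> [x|y /TS [_ /Sf [x <-] <-]]; [apply: ST | exists x].
apply: (IH _ _ id _ _ (hom_id _)) fp_ker => // [x fx0|x /i_inj]; last by exists x.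
by rewrite /kerp /= fx0 (hom0 hi).
Qed.

(* Schanuel's lemma in a form stable under induction: [b \o a] need only be the
   identity modulo [kerp f].  Every [x] in [kerp f] is [b (a x) + (x - b (a x))], so a
   cover [h] of [kerp g] yields the cover [(r, p) |-> b (h r) + p - b (a p)] of
   [kerp f]; this cover and [h (+) id] again satisfy the hypotheses, with [id] as [b]
   and [a] re-lifted using the projectivity of [R (+) P]. *)
Lemma fp_sub_kerp_transfer k P Q M N (f : P -> M) (g : Q -> N) (a : P -> Q) (b : Q -> P) :
  fgproj P -> is_hom f -> is_hom g -> is_hom a -> is_hom b ->
  (forall x, f x = 0 -> g (a x) = 0) -> (forall y, g y = 0 -> f (b y) = 0) ->
  (forall x, f (b (a x)) = f x) ->
  fp_sub k (kerp g) -> fp_sub k (kerp f).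
Proof.
elim: k P Q M N f g a b => [|k IH] P Q M N f g a b [Pproj Pfg] hf hg ha hb ga fb fba.
all: pose c x := x - b (a x).
all: have hc : is_hom c by apply: hom_sub (hom_id _) (hom_comp ha hb).
all: have fc x : f (c x) = 0 by rewrite /c (homB hf) fba subrr.
all: have bac x : b (a x) + c x = x by rewrite addrC subrK.
  case=> ys [ysg gys]; case: Pfg => xs xsP.
  exists (map b ys ++ map c xs); split=> [x|x /[dup] /ga /gys ax fx0].
    by rewrite mem_cat => /orP[] /mapP [z z_in ->]; [apply/fb/ysg | apply: fc].
  rewrite -[x]bac; apply: span_add.
  - by apply: span_catl; apply: span_hom hb _ ax.
  - by apply: span_catr; apply: span_hom hc _ (xsP x).
case=> R [h [[Rproj Rfg] hh [hg0 g0h] fp_kerh]].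
pose h' (z : dsum R P) := b (h z.1) + c z.2.
have hh' : is_hom h'.
  exact: hom_add (hom_comp (hom_fst _ _) (hom_comp hh hb)) (hom_comp (hom_snd _ _) hc).
have fh' z : f (h' z) = 0 by rewrite /h' hf.1 fb ?hg0 // fc addr0.
pose g' (z : dsum R P) := (h z.1, z.2) : dsum Q P.
have hg' : is_hom g' by apply: hom_pair (hom_comp (hom_fst _ _) hh) (hom_snd _ _).
have RPfgp : fgproj (dsum R P) by apply: dsum_fgproj.
have [a' [ha' g'a']] : exists a' : dsum R P -> dsum R P,
    is_hom a' /\ forall z, g' (a' z) = (a (h' z), h' z).
  apply: proj_lift_image RPfgp.1 hg' (hom_pair (hom_comp hh' ha) hh') _ => z.
  by have [r hr] := g0h _ (ga _ (fh' z)); exists (r, h' z); rewrite /g' hr.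
exists (dsum R P), h'; split=> //.
  by split=> [//|x fx0]; have [r hr] := g0h _ (ga _ fx0); exists (r, x); rewrite /h' /= hr.
apply: (IH _ _ _ _ h' g' a' id RPfgp hh' hg' ha' (hom_id _)).
- by move=> z h'z0; rewrite g'a' h'z0 (hom0 ha).
- by case=> r p [hr0 ->]; rewrite /h' /= hr0 (hom0 hb) (hom0 hc) addr0.
- move=> z; case: (a' z) (g'a' z) => r p [hr ->].
  by rewrite /h' /= hr bac.
apply: (fp_sub_inj_image (i := fun r => (r, 0) : dsum R P)) fp_kerh.
- exact: hom_inl.
- by move=> r [].
- by move=> r hr0; rewrite /kerp /g' /= hr0.
- by case=> r p [hr0 ->]; exists r.
Qed.

Lemma fp_sub_kerp k M (S : M -> Prop) P (f : P -> M) :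
  fp_sub k.+1 S -> fgproj P -> is_hom f -> maps_onto f S -> fp_sub k (kerp f).
Proof.
case=> Q [g [Qfgp hg [gS Sg] fp_kerg]] Pfgp hf [fS Sf].
have [a [ha ga]] := proj_lift_image Pfgp.1 hg hf (fun x => Sg _ (fS x)).
have [b [hb fb]] := proj_lift_image Qfgp.1 hf hg (fun y => Sf _ (gS y)).
apply: (fp_sub_kerp_transfer Pfgp hf hg ha hb _ _ _ fp_kerg) => [x|y|x].
- by rewrite /kerp ga.
- by rewrite /kerp fb.
- by rewrite fb ga.
Qed.

Lemma fp_sub_retract k M N (S : M -> Prop) (T : N -> Prop) (phi : M -> N) (psi : N -> M) :
  is_hom phi -> is_hom psi ->
  (forall x, S x -> T (phi x)) -> (forall y, T y -> S (psi y)) ->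
  (forall x, S x -> psi (phi x) = x) ->
  fp_sub k T -> fp_sub k S.
Proof.
move=> hphi hpsi ST TS psiphi; case: k => [|k].
  case=> ys [ysT Tys]; exists (map psi ys); split=> [_ /mapP [y /ysT Ty ->]|x Sx].
    exact: TS.
  by rewrite -(psiphi _ Sx); apply/span_hom/Tys/ST.
case=> Q [g [Qfgp hg [gT Tg] fp_kerg]].
have g_psi_onto : forall x, S x -> exists y, psi (g y) = x.
  by move=> x /[dup] Sx /ST /Tg [y gy]; exists y; rewrite gy psiphi.
exists Q, (psi \o g); split=> //; first exact: hom_comp hg hpsi.
  by split=> [y|]; [apply/TS/gT | apply: g_psi_onto].
have [a [ha ga]] : exists a : Q -> Q, is_hom a /\ forall y, g (a y) = phi (psi (g y)).
  apply: proj_lift_image Qfgp.1 hg (hom_comp (hom_comp hg hpsi) hphi) _ => y.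
  exact/Tg/ST/TS/gT.
apply: (fp_sub_kerp_transfer (b := id) Qfgp (hom_comp hg hpsi) hg ha (hom_id _)) fp_kerg.
- by move=> y /= psigy0; rewrite /kerp ga psigy0 (hom0 hphi).
- by move=> y gy0; rewrite /kerp /= gy0 (hom0 hpsi).
- by move=> y; rewrite /= ga psiphi //; apply/TS/gT.
Qed.

Lemma fp_sub_dsum k P M (S : M -> Prop) : S 0 -> fgproj P -> fp_sub k S ->
  fp_sub k (fun z : dsum P M => S z.2).
Proof.
move=> S0 [Pproj [ps psP]]; case: k => [|k].
  case=> xs [xsS Sxs].
  exists (map (fun p => (p, 0) : dsum P M) ps ++ map (fun x => (0, x) : dsum P M) xs).
  split=> [z|[p x] /= Sx].
    by rewrite mem_cat => /orP[] /mapP [w w_in ->] //=; apply: xsS.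
  rewrite dsum_split; apply: span_add.
  - by apply: span_catl; apply: span_hom (hom_inl P M) _ _.
  - by apply: span_catr; apply: span_hom (hom_inr P M) _ (Sxs _ Sx).
case=> Q [g [Qfgp hg [gS Sg] fp_kerg]].
exists (dsum P Q), (fun z => (z.1, g z.2) : dsum P M); split.
- by apply: dsum_fgproj => //; split; last by exists ps.
- exact: hom_pair (hom_fst _ _) (hom_comp (hom_snd _ _) hg).
- by split=> [z|[p x] /= /Sg [q <-]]; [apply: gS | exists (p, q)].
apply: (fp_sub_inj_image (i := fun q => (0, q) : dsum P Q)) fp_kerg.
- exact: hom_inr.
- by move=> q [].
- by move=> q gq0; rewrite /kerp /= gq0.
- by case=> p q [-> gq0]; exists q.
Qed.

End FiniteTypeSubmodules.

Section Resolutions.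
Variable G : group.
Implicit Types M N P : gmod G.

Definition resolution M (S : M -> Prop) (Q : nat -> gmod G) (a : Q 0 -> M)
    (d : forall j, Q j.+1 -> Q j) : Prop :=
  [/\ is_hom a /\ (forall j, is_hom (d j)), maps_onto a S,
      (forall x, a x = 0 <-> exists z, d 0 z = x),
      (forall j (x : Q j.+1), d j x = 0 <-> exists z, d j.+1 z = x) &
      (forall j, projective (Q j))].

Definition cover_map M (S : M -> Prop) : free_gmod G {x : M | S x} -> M :=
  free_map (fun x : {x : M | S x} => sval x).
Arguments cover_map {M} S.

Lemma cover_map_hom M (S : M -> Prop) : is_hom (cover_map S).
Proof. exact: free_map_hom. Qed.

Lemma cover_map_onto M (S : M -> Prop) : gmod_closed S -> maps_onto (cover_map S) S.
Proof.
move=> S_closed; split=> [|y Sy]; last first.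
  by exists (free_gen G (exist _ y Sy)); rewrite /cover_map free_map_gen.
apply: free_gmod_ind; first exact: preim_closed S_closed (cover_map_hom S).
by case=> y Sy; rewrite /cover_map free_map_gen.
Qed.

Record arrow := Arrow {
  arrow_src : gmod G; arrow_tgt : gmod G; arrow_map : arrow_src -> arrow_tgt }.
Arguments arrow_map : clear implicits.

Definition kernel_cover (s : arrow) : arrow := Arrow (cover_map (kerp (arrow_map s))).

Lemma kernel_cover_exact (s : arrow) : is_hom (arrow_map s) ->
  forall x, arrow_map s x = 0 <-> exists z, arrow_map (kernel_cover s) z = x.
Proof.
move=> hs x; have [onto_ker ker_onto] := cover_map_onto (kerp_closed hs).
by split=> [/ker_onto [z <-]|[z <-]]; [exists z | apply: onto_ker].
Qed.

Lemma projective_resolution M (S : M -> Prop) : gmod_closed S ->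
  exists Q a d, @resolution M S Q a d.
Proof.
move=> S_closed; pose s0 := Arrow (cover_map S).
have hs j : is_hom (arrow_map (iter j kernel_cover s0)).
  by case: j => [|j]; apply: cover_map_hom.
exists (fun j => arrow_src (iter j kernel_cover s0)), (arrow_map s0).
exists (fun j => arrow_map (iter j.+1 kernel_cover s0)); split.
- by split=> [|j]; [apply: hs 0 | apply: hs j.+1].
- exact: cover_map_onto.
- exact: kernel_cover_exact (hs 0).
- by move=> j; apply: kernel_cover_exact (hs j.+1).
- by case=> [|j]; apply: free_projective.
Qed.

Definition gcons P (Q : nat -> gmod G) (j : nat) : gmod G := if j is j.+1 then Q j else P.

Definition dcons P (Q : nat -> gmod G) (a : Q 0 -> P) (d : forall j, Q j.+1 -> Q j)
    (j : nat) : gcons P Q j.+1 -> gcons P Q j :=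
  match j return gcons P Q j.+1 -> gcons P Q j with 0 => a | j.+1 => d j end.

Lemma resolution_cons M (S : M -> Prop) P (f : P -> M) (Q : nat -> gmod G) a d :
  projective P -> is_hom f -> maps_onto f S -> @resolution P (kerp f) Q a d ->
  @resolution M S (gcons P Q) f (dcons a d).
Proof.
move=> Pproj hf fS [[ha hd] [akerf kerfa] exact0 exact_succ Qproj]; split=> //.
- by split=> // -[|j] /=.
- by move=> x; split=> [/kerfa [z <-]|[z <-]]; [exists z | apply: akerf].
- by case=> [|j] x /=; [apply: exact0 | apply: exact_succ].
- by case=> [|j] /=.
Qed.

Lemma fp_sub_free_resolution k M (S : M -> Prop) : gmod_closed S -> fp_sub k S ->
  exists Q a d, @resolution M S Q a d /\ forall j, (j <= k)%N -> fg_free (Q j).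
Proof.
elim: k M S => [|k IH] M S S_closed fpS.
all: have [n [f [hf fS]]] := fg_sub_free_cover S_closed (fp_sub_fg fpS).
all: have ker_closed := kerp_closed hf.
- have [Q [a [d resQ]]] := projective_resolution ker_closed.
  exists (gcons (free_gmod G 'I_n) Q), f, (dcons a d); split.
    exact: resolution_cons free_projective hf fS resQ.
  by case=> // _; apply: free_fg_free.
- have [Q [a [d [resQ Qfree]]]] := IH _ _ ker_closed (fp_sub_kerp fpS free_fgproj hf fS).
  exists (gcons (free_gmod G 'I_n) Q), f, (dcons a d); split.
    exact: resolution_cons free_projective hf fS resQ.
  by case=> [_|j /Qfree]; first apply: free_fg_free.
Qed.

End Resolutions.

Section Chains.
Variables (G : group) (X : nat -> gmod G) (dl : forall i, X i.+1 -> X i) (S : X 0 -> Prop).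

Definition cycles (i : nat) : X i -> Prop :=
  match i return X i -> Prop with 0 => S | j.+1 => kerp (@dl j) end.
Arguments cycles : clear implicits.

Definition exact_at (i : nat) : Prop := is_hom (@dl i) /\ maps_onto (@dl i) (cycles i).

Lemma fp_sub_exact_chain N : (forall i, (i < N)%N -> exact_at i) ->
  (forall i, (0 < i <= N)%N -> fgproj (X i)) -> fg_sub (cycles N) -> fp_sub N S.
Proof.
move=> dl_exact Xfgp fg_cycN; suff: forall k i, (i + k)%N = N -> fp_sub k (cycles i).
  by move/(_ N 0 (add0n N)).
elim=> [|k IH] i ikN; first by move: ikN; rewrite addn0 => ->.
have i_lt : (i < N)%N by rewrite -ikN -addSnnS leq_addr.
have [hd dl_onto] := dl_exact i i_lt.
exists (X i.+1), (@dl i); split=> //; first by apply: Xfgp; rewrite i_lt.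
by apply: IH; rewrite addSnnS.
Qed.

Lemma fp_sub_exact_chain_fgproj N : (forall i, (i <= N)%N -> exact_at i) ->
  (forall i, (0 < i <= N.+1)%N -> fgproj (X i)) -> fp_sub N S.
Proof.
move=> dl_exact Xfgp; apply: fp_sub_exact_chain => [i /ltnW /dl_exact //|i /andP [i_gt0 iN]|].
  by apply: Xfgp; rewrite i_gt0 ltnW.
have [hd dl_onto] := dl_exact N (leqnn N).
exact: fg_sub_image hd (Xfgp N.+1 (leqnn _)).2 dl_onto.
Qed.

Lemma fp_sub_cycles N m : (forall i, (i < N)%N -> exact_at i) ->
  (forall i, (0 < i <= N)%N -> fgproj (X i)) -> fp_sub m S ->
  forall i, (i <= N)%N -> (i <= m)%N -> fp_sub (m - i) (cycles i).
Proof.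
move=> dl_exact Xfgp fpS; elim=> [|i IH] iN im; first by rewrite subn0.
have := IH (ltnW iN) (ltnW im).
have -> : (m - i = (m - i.+1).+1)%N by rewrite subnS prednK // subn_gt0.
have [hd dl_onto] := dl_exact i iN.
by move/fp_sub_kerp; apply=> //; apply: Xfgp; rewrite iN.
Qed.

End Chains.

Arguments cycles {G X} dl S i _.
Arguments exact_at {G X} dl S i.

Lemma exact_upto_exact_at G (C : nat -> gmod G) (d : forall i, C i.+1 -> C i)
    (aug : C 0 -> Zmod G) N :
  exact_upto d aug N -> forall i, (i < N)%N -> exact_at d (kerp aug) i.
Proof.
case=> _ hd _ exact0 exact_succ [|i] iN; split; try exact: hd.
  by split=> [x|y /exact0 //]; apply/exact0; exists x.
by split=> [x|y /(exact_succ _ iN) //]; apply/(exact_succ _ iN); exists x.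
Qed.

Lemma resolution_exact_at G (M : gmod G) (S : M -> Prop) Q a d :
  @resolution G M S Q a d -> forall i, exact_at (dcons a d) S i.
Proof.
case=> [[ha hd] aS exact0 exact_succ _] [|[|i]]; split=> //=.
- by split=> [x|y /exact0 //]; apply/exact0; exists x.
- by split=> [x|y /exact_succ //]; apply/exact_succ; exists x.
Qed.

Section GroupPair.
Variables (G : group) (ZGP : gmod G) (eps : ZGP -> Zmod G).
Hypothesis heps : is_hom eps.
Hypothesis eps_onto : forall z : Zmod G, exists x, eps x = z.

Lemma fp_sub_kerp_etaeps k (P0 : gmod G) (eta : P0 -> Zmod G) : fgproj P0 -> is_hom eta ->
  fp_sub k (kerp (etaeps eta eps)) <-> fp_sub k (Delta eps).
Proof.
move=> P0fgp heta; have [psi [hpsi eps_psi]] := P0fgp.1 _ _ _ _ heps heta eps_onto.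
split=> fpk.
  apply: (fp_sub_retract (phi := fun y => (0, y) : dsum P0 ZGP)
                         (psi := fun z : dsum P0 ZGP => z.2 + psi z.1)) fpk.
  - exact: hom_inr.
  - exact: hom_add (hom_snd _ _) (hom_comp (hom_fst _ _) hpsi).
  - by move=> y; rewrite /kerp /etaeps /= (hom0 heta) add0r.
  - by case=> x y; rewrite /Delta /kerp /etaeps /= heps.1 eps_psi addrC.
  - by move=> y _ /=; rewrite (hom0 hpsi) addr0.
have := fp_sub_dsum (hom0 heps) P0fgp fpk.
apply: (fp_sub_retract (phi := fun z : dsum P0 ZGP => (z.1, z.2 + psi z.1) : dsum P0 ZGP)
                       (psi := fun z : dsum P0 ZGP => (z.1, z.2 - psi z.1) : dsum P0 ZGP)).
- exact: hom_pair (hom_fst _ _) (hom_add (hom_snd _ _) (hom_comp (hom_fst _ _) hpsi)).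
- exact: hom_pair (hom_fst _ _) (hom_sub (hom_snd _ _) (hom_comp (hom_fst _ _) hpsi)).
- by case=> x y; rewrite /Delta /kerp /etaeps /= heps.1 eps_psi addrC.
- by case=> x y; rewrite /Delta /kerp /etaeps /= (homB heps) eps_psi addrC subrK.
- by case=> x y _ /=; rewrite addrK.
Qed.

(* [free_gmod G 'I_0] is the zero module: a resolution of [Delta eps] becomes an
   augmented sequence with [P_0 = 0]. *)
Definition aug_chain (Q : nat -> gmod G) : nat -> gmod G := gcons (free_gmod G 'I_0) Q.

Definition aug_d (Q : nat -> gmod G) (a : Q 0 -> ZGP) (d : forall j, Q j.+1 -> Q j) :
    forall i, augC (aug_chain Q) ZGP i.+1 -> augC (aug_chain Q) ZGP i :=
  dcons (fun q => (0, a q) : dsum (free_gmod G 'I_0) ZGP) d.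

Definition aug0 (Q : nat -> gmod G) : augC (aug_chain Q) ZGP 0 -> Zmod G :=
  etaeps (fun _ => 0) eps.
Arguments aug0 : clear implicits.

Lemma resolution_exact_upto Q a d : @resolution G ZGP (Delta eps) Q a d ->
  forall N, exact_upto (aug_d a d) (aug0 Q) N.
Proof.
case=> [[ha hd] [aDelta Delta_a] exact0 exact_succ _] N; split.
- exact: hom_add (hom_zero _ _) (hom_comp (hom_snd _ _) heps).
- by case=> [|i] _ /=; [apply: hom_pair (hom_zero _ _) ha | apply: hd].
- by move=> z; have [x <-] := eps_onto z; exists (0, x); rewrite /aug0 /etaeps add0r.
- case=> u y; rewrite /aug0 /etaeps /= add0r (free_gmod0_eq0 u).
  by split=> [/Delta_a [q <-]|[q [<-]]]; [exists q | apply: aDelta].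
- case=> [|i] _ x /=; last exact: exact_succ.
  by split=> [[/exact0] | /exact0 ->].
Qed.

Lemma pair_FP_fp_sub n : pair_FP eps n.+1 <-> fp_sub n (Delta eps).
Proof.
split=> [[Q [d [a [homs aDelta exact0 exact_succ [Qproj Qfg]]]]]|].
  have resQ : resolution (Delta eps) a d by [].
  apply: (fp_sub_exact_chain_fgproj (dl := dcons a d)) => [i _|[//|i] i_le].
    exact: resolution_exact_at resQ i.
  by split; [apply: Qproj | apply: Qfg].
case/(fp_sub_free_resolution (kerp_closed heps)) => Q [a [d [resQ Qfree]]].
case: resQ => homs aDelta exact0 exact_succ Qproj.
by exists Q, d, a; split=> //; split=> // j /Qfree /fg_free_fgproj [].
Qed.

Definition aug_kernels_fg (N : nat) : Prop :=
  forall (j : nat), (j.+1 < N)%N ->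
  forall (P : nat -> gmod G) (eta : P 0%N -> Zmod G)
         (d : forall i, augC P ZGP i.+1 -> augC P ZGP i),
    is_hom eta ->
    exact_upto d (etaeps eta eps : augC P ZGP 0%N -> Zmod G) j.+1 ->
    (forall i, (i <= j.+1)%N -> projective (P i) /\ fg (P i)) ->
    fg_sub (fun x : P j.+1 => d j x = 0).

Lemma fp_sub_aug_kernels n : fp_sub n (Delta eps) -> aug_kernels_fg n.+1.
Proof.
move=> fpn j j_lt P eta d heta dexact Pfgp.
have Cfgp i : (0 < i <= j.+1)%N -> fgproj (augC P ZGP i) by case: i => [//|i] /Pfgp.
have fp_ker := (fp_sub_kerp_etaeps _ (Pfgp 0%N isT) heta).2 fpn.
have := fp_sub_cycles (exact_upto_exact_at dexact) Cfgp fp_ker (leqnn _) j_lt.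
exact: fp_sub_fg.
Qed.

Lemma aug_kernels_fp_sub n :
  fg_sub (Delta eps) -> aug_kernels_fg n.+1 -> fp_sub n (Delta eps).
Proof.
move=> fgDelta kernels; suff: forall k, (k <= n)%N -> fp_sub k (Delta eps) by apply.
elim=> [//|k IH] k_lt.
have [Q [a [d [resQ Qfree]]]] := fp_sub_free_resolution (kerp_closed heps) (IH (ltnW k_lt)).
have Lfgp i : (i <= k.+1)%N -> fgproj (aug_chain Q i).
  by case: i => [|i] /= i_le; [apply: free_fgproj | apply/fg_free_fgproj/Qfree].
have Lexact := resolution_exact_upto resQ k.+1.
have fg_ker := kernels k k_lt _ _ _ (hom_zero _ _) Lexact Lfgp.
apply/(@fp_sub_kerp_etaeps _ (free_gmod G 'I_0) _ free_fgproj (hom_zero _ _)).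
apply: (@fp_sub_exact_chain _ _ (aug_d a d) (kerp (aug0 Q)) k.+1)
  => [|[//|i] /andP [_ /Lfgp]|] //.
exact: exact_upto_exact_at Lexact.
Qed.

Definition free_aug_resolution (N : nat) : Prop :=
  exists (L : nat -> gmod G) (eta : L 0%N -> Zmod G)
         (d : forall i, augC L ZGP i.+1 -> augC L ZGP i),
    [/\ is_hom eta,
        exact_upto d (etaeps eta eps : augC L ZGP 0%N -> Zmod G) N &
        forall i, (i <= N)%N -> fg_free (L i)].

Lemma fp_sub_free_aug_resolution n : fp_sub n (Delta eps) -> free_aug_resolution n.+1.
Proof.
case/(fp_sub_free_resolution (kerp_closed heps)) => Q [a [d [resQ Qfree]]].
exists (aug_chain Q), (fun _ => 0), (aug_d a d); split.
- exact: hom_zero.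
- exact: resolution_exact_upto.
- by case=> [|i] /= i_le; [apply: free_fg_free | apply: Qfree].
Qed.

Lemma free_aug_resolution_fp_sub n : free_aug_resolution n.+1 -> fp_sub n (Delta eps).
Proof.
case=> L [eta [d [heta dexact Lfree]]].
apply/(fp_sub_kerp_etaeps _ (fg_free_fgproj (Lfree 0%N isT)) heta).
apply: (fp_sub_exact_chain_fgproj (dl := d)) => [i i_le|[//|i] /andP [_ i_le]].
  exact: exact_upto_exact_at dexact _ i_le.
exact/fg_free_fgproj/Lfree.
Qed.

End GroupPair.

Theorem lemma3p1 (G : group) (m : nat) (Ps : 'I_m -> subgroup G)
  (ZGP : gmod G) (e : 'I_m -> ZGP) (eps : ZGP -> Zmod G) (n : nat) :
  fin_gen_group G -> (0 < m)%N ->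
  is_perm_module Ps e -> is_augmentation e eps -> (1 <= n)%N ->
  (pair_FP eps n <->
   (fg_sub (Delta eps) /\
    forall (j : nat), (j.+1 < n)%N ->
    forall (P : nat -> gmod G) (eta : P 0%N -> Zmod G)
           (d : forall i, augC P ZGP i.+1 -> augC P ZGP i),
      is_hom eta ->
      exact_upto d (etaeps eta eps : augC P ZGP 0%N -> Zmod G) j.+1 ->
      (forall i, (i <= j.+1)%N -> projective (P i) /\ fg (P i)) ->
      fg_sub (fun x : P j.+1 => d j x = 0)))
  /\
  (pair_FP eps n <->
   exists (L : nat -> gmod G) (eta : L 0%N -> Zmod G)
          (d : forall i, augC L ZGP i.+1 -> augC L ZGP i),
     [/\ is_hom eta,
         exact_upto d (etaeps eta eps : augC L ZGP 0%N -> Zmod G) n &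
         forall i, (i <= n)%N -> fg_free (L i)]).
Proof.
move=> _ m_gt0 _ [heps eps_e] n_gt0.
have eps_onto (z : Zmod G) : exists x, eps x = z.
  have [im0 imD imN _] := image_closed heps.
  rewrite -[z]intz; apply: (mulrz_closed_pred im0 imD imN).
  by exists (e (Ordinal m_gt0)); apply: eps_e.
case: n n_gt0 => // n _.
split; apply: iff_trans (pair_FP_fp_sub heps n) _; split.
- by move=> fpn; split; [apply: fp_sub_fg fpn | apply: fp_sub_aug_kernels].
- by case=> fgDelta; apply: aug_kernels_fp_sub.
- exact: fp_sub_free_aug_resolution.
- exact: free_aug_resolution_fp_sub.
Qed.
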